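(* Let $\Lambda$ be a left cancellative small category. The core $\Lambda_c$ is a subcategory of $\Lambda$ containing all invertible elements. Furthermore: (1) if $\alpha\beta\in\Lambda_c$ (with $s(\alpha)=r(\beta)$), then $\alpha,\beta\in\Lambda_c$; (2) if $\alpha,\beta\in\Lambda_c$ with $r(\alpha)=r(\beta)$ and $\alpha\Lambda\cap\beta\Lambda=\bigcup_{i=1}^n\alpha_i\Lambda$ for $\alpha_i\in\Lambda$, then $\{\alpha_i\}_{i=1}^n$ is exhaustive (at $r(\alpha)$); (3) if $\Lambda$ is singly aligned, $\alpha,\beta\in\Lambda_c$ with $r(\alpha)=r(\beta)$, and $\alpha\Lambda\cap\beta\Lambda=\gamma\Lambda$, then $\gamma\in\Lambda_c$.
   Context: $\Lambda$ is a small category with objects $\Lambda^0$, range $r$ and source $s$; $\alpha\Lambda=\{\alpha\beta:s(\alpha)=r(\beta)\}$; $u$ is invertible if $uv=r(u)$ for some $v$. The core is $\Lambda_c=\{\alpha\in\Lambda:\alpha\Lambda\cap\beta\Lambda\neq\emptyset\text{ for all }\beta\in r(\alpha)\Lambda\}$. For $x\in\Lambda^0$, $B\subseteq x\Lambda$ is exhaustive (at $x$) if for every $\alpha\in x\Lambda$ there is $\beta\in B$ with $\alpha\Lambda\cap\beta\Lambda\neq\emptyset$. $\Lambda$ is singly aligned if every $\alpha\Lambda\cap\beta\Lambda$ is empty or of the form $\rho\Lambda$. *)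

From Stdlib Require Import List.

Record SmallCat := {
  Obj : Type;
  Mor : Type;
  rng : Mor -> Obj;
  src : Mor -> Obj;
  idm : Obj -> Mor;
  comp : Mor -> Mor -> Mor;  (* comp a b = "a b", meaningful when src a = rng b *)
  rng_idm : forall x, rng (idm x) = x;
  src_idm : forall x, src (idm x) = x;
  rng_comp : forall a b, src a = rng b -> rng (comp a b) = rng a;
  src_comp : forall a b, src a = rng b -> src (comp a b) = src b;
  comp_idl : forall a, comp (idm (rng a)) a = a;
  comp_idr : forall a, comp a (idm (src a)) = a;
  comp_assoc : forall a b c, src a = rng b -> src b = rng c ->
     comp (comp a b) c = comp a (comp b c)
}.

Arguments rng {_} _.
Arguments src {_} _.
Arguments idm {_} _.
Arguments comp {_} _ _.

Definition left_cancellative (C : SmallCat) : Prop :=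
  forall a b c : Mor C, src a = rng b -> src a = rng c ->
    comp a b = comp a c -> b = c.

(* alpha Lambda = { alpha beta : s(alpha) = r(beta) } *)
Definition rset {C : SmallCat} (a : Mor C) : Mor C -> Prop :=
  fun m => exists b, src a = rng b /\ m = comp a b.

Definition meets {C : SmallCat} (a b : Mor C) : Prop :=
  exists m, rset a m /\ rset b m.

Definition invertible {C : SmallCat} (u : Mor C) : Prop :=
  exists v, src u = rng v /\ comp u v = idm (rng u).

Definition core {C : SmallCat} (a : Mor C) : Prop :=
  forall b : Mor C, rng b = rng a -> meets a b.

Definition exhaustive {C : SmallCat} (x : Obj C) (B : Mor C -> Prop) : Prop :=
  (forall b, B b -> rng b = x) /\
  (forall a : Mor C, rng a = x -> exists b, B b /\ meets a b).

Definition singly_aligned (C : SmallCat) : Prop :=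
  forall a b : Mor C,
    (~ meets a b) \/
    (exists rho : Mor C, forall m, (rset a m /\ rset b m) <-> rset rho m).

(** The core is closed under all the relevant operations because membership
    in [a Λ] propagates along composition: [a Λ] contains [(a x) Λ], and
    precomposing with [a] maps [b Λ] into [(a b) Λ].  For (2) and (3), given
    core elements [a], [b] and any [c] with the same range, first meet [c]
    inside [a Λ] at some [m], then meet [m] inside [b Λ] (as [b] is in the
    core); the result lies in [a Λ ∩ b Λ ∩ c Λ].  Left cancellation is only
    needed to pass from [a b] in the core to [b] in the core. *)
From Stdlib Require Import List.

Section RightIdeals.
Variable C : SmallCat.
Implicit Types a b c m n u x : Mor C.

Lemma rset_refl a : rset a a.
Proof. exists (idm (src a)). rewrite rng_idm, comp_idr. auto. Qed.

Lemma rset_comp a b : src a = rng b -> rset a (comp a b).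
Proof. intros H. exists b. auto. Qed.

Lemma rset_rng a m : rset a m -> rng m = rng a.
Proof. intros [x [Hx ->]]. apply rng_comp. exact Hx. Qed.

Lemma rset_trans a m n : rset a m -> rset m n -> rset a n.
Proof.
  intros [x [Hx ->]] [y [Hy ->]].
  rewrite src_comp in Hy by exact Hx.
  exists (comp x y). split.
  - rewrite rng_comp by exact Hy. exact Hx.
  - apply comp_assoc; assumption.
Qed.

Lemma rset_compl a b n : src a = rng b -> rset b n -> rset (comp a b) (comp a n).
Proof.
  intros Hab [x [Hx ->]]. exists x. split.
  - rewrite src_comp by exact Hab. exact Hx.
  - symmetry. apply comp_assoc; assumption.
Qed.

Lemma rset_idm c : rset (idm (rng c)) c.
Proof. exists c. rewrite src_idm, comp_idl. auto. Qed.

Lemma rset_invertible u c : invertible u -> rng c = rng u -> rset u c.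
Proof.
  intros [v [Hv Huv]] Hc.
  assert (Hvc : src v = rng c).
  { rewrite <- (src_comp _ u v Hv), Huv, src_idm. auto. }
  exists (comp v c). split.
  - rewrite rng_comp by exact Hvc. exact Hv.
  - rewrite <- comp_assoc by assumption. rewrite Huv, <- Hc, comp_idl. auto.
Qed.

Lemma meets_compl_cancel a b c : left_cancellative C ->
  src a = rng b -> src a = rng c -> meets (comp a b) (comp a c) -> meets b c.
Proof.
  intros HC Hb Hc [m [[x [Hx Hmx]] [y [Hy Hmy]]]].
  rewrite src_comp in Hx by exact Hb. rewrite src_comp in Hy by exact Hc.
  rewrite Hmx, !comp_assoc in Hmy by assumption.
  apply HC in Hmy; try (rewrite rng_comp; assumption).
  exists (comp b x). split.
  - apply rset_comp. exact Hx.
  - rewrite Hmy. apply rset_comp. exact Hy.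
Qed.

Lemma core_idm (o : Obj C) : core (idm o).
Proof.
  intros c Hc. rewrite rng_idm in Hc. subst o.
  exists c. split; [apply rset_idm | apply rset_refl].
Qed.

Lemma core_invertible u : invertible u -> core u.
Proof.
  intros Hu c Hc. exists c. split; [apply rset_invertible; assumption | apply rset_refl].
Qed.

Lemma core_comp a b : src a = rng b -> core a -> core b -> core (comp a b).
Proof.
  intros Hab Ha Hb c Hc. rewrite rng_comp in Hc by exact Hab.
  destruct (Ha c Hc) as [m [[x [Hx ->]] Hcm]].
  assert (Hxb : rng x = rng b) by congruence.
  destruct (Hb x Hxb) as [n [Hbn Hxn]].
  exists (comp a n). split.
  - apply rset_compl; assumption.
  - apply (rset_trans _ _ _ Hcm). apply rset_compl; assumption.
Qed.

Lemma core_rset a m : rset a m -> core m -> core a.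
Proof.
  intros Ham Hm c Hc.
  assert (Hcm : rng c = rng m) by (rewrite (rset_rng _ _ Ham); exact Hc).
  destruct (Hm c Hcm) as [n [Hmn Hcn]].
  exists n. split; [exact (rset_trans _ _ _ Ham Hmn) | exact Hcn].
Qed.

Lemma core_compr a b : left_cancellative C ->
  src a = rng b -> core (comp a b) -> core b.
Proof.
  intros HC Hab Hcore c Hc.
  apply (meets_compl_cancel a b c HC); try congruence.
  apply Hcore. rewrite !rng_comp; congruence.
Qed.

Lemma meets_core_common a b c : core b -> rng a = rng b -> meets a c ->
  exists n, rset a n /\ rset b n /\ rset c n.
Proof.
  intros Hb Hab [m [Ham Hcm]].
  assert (Hm : rng m = rng b) by (rewrite (rset_rng _ _ Ham); exact Hab).
  destruct (Hb m Hm) as [n [Hbn Hmn]].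
  exists n. split; [|split]; eauto using rset_trans.
Qed.

End RightIdeals.

Theorem lemma4p13 (C : SmallCat) (HC : left_cancellative C) :
  (* the core is a subcategory containing all invertible elements *)
  ((forall x : Obj C, core (idm x)) /\
   (forall a b : Mor C, src a = rng b -> core a -> core b -> core (comp a b)) /\
   (forall u : Mor C, invertible u -> core u)) /\
  (* (1) *)
  (forall a b : Mor C, src a = rng b -> core (comp a b) -> core a /\ core b) /\
  (* (2) *)
  (forall (a b : Mor C) (alphas : list (Mor C)),
     core a -> core b -> rng a = rng b ->
     (forall m, (rset a m /\ rset b m) <-> exists ai, In ai alphas /\ rset ai m) ->
     exhaustive (rng a) (fun ai => In ai alphas)) /\
  (* (3) *)
  (singly_aligned C ->
   forall a b g : Mor C, core a -> core b -> rng a = rng b ->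
     (forall m, (rset a m /\ rset b m) <-> rset g m) ->
     core g).
Proof.
  split; [split; [|split]|split; [|split]].
  - apply core_idm.
  - apply core_comp.
  - apply core_invertible.
  - intros a b Hab Hcore. split.
    + exact (core_rset _ _ _ (rset_comp _ _ _ Hab) Hcore).
    + exact (core_compr _ _ _ HC Hab Hcore).
  - intros a b alphas Ha Hb Hab Heq. split.
    + intros ai Hin.
      assert (Hai : rset a ai /\ rset b ai) by (apply Heq; eauto using rset_refl).
      exact (rset_rng _ _ _ (proj1 Hai)).
    + intros c Hc.
      destruct (meets_core_common _ a b c Hb Hab (Ha c Hc)) as [n [Han [Hbn Hcn]]].
      destruct (proj1 (Heq n) (conj Han Hbn)) as [ai [Hin Hai]].
      exists ai. split; [exact Hin | exists n; auto].
  - (* single alignment only guarantees that such a [g] exists *)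
    intros _ a b g Ha Hb Hab Heq c Hc.
    assert (Hg : rng g = rng a)
      by exact (rset_rng _ _ _ (proj1 (proj2 (Heq g) (rset_refl _ g)))).
    rewrite Hg in Hc.
    destruct (meets_core_common _ a b c Hb Hab (Ha c Hc)) as [n [Han [Hbn Hcn]]].
    exists n. split; [apply Heq; auto | exact Hcn].
Qed.
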